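(* There exist instances of the multi-agent binary-action contract model (described in the context), with additive reward functions and $n$ agents for every $n$, whose price of equality is $\Omega\left(\frac{\log n}{\log\log n}\right)$.
   Context: Model: principal and agents $A=[n]$; each agent $i$ has a finite action set $T_i$ (pairwise disjoint), $T=\bigsqcup_iT_i$, costs $c_j\ge0$ with $c(S_i)=\sum_{j\in S_i}c_j$; in the binary-action model $|T_i|=1$ for all $i$. Reward $f:2^T\to[0,1]$ monotone, $f(\emptyset)=0$; $f$ is additive if $f(S)=\sum_{a\in S}f(\{a\})$. Contract $\boldsymbol{\alpha}\in[0,1]^A$; agent $i$'s utility $\alpha_if(S)-c(S\cap T_i)$; $S\in\mathsf{NE}(\boldsymbol{\alpha})$ (pure Nash equilibrium) if no agent can gain by changing her own subset of actions. Principal's utility $(1-\sum_i\alpha_i)f(S)$. A contract is equal-pay if all its nonzero entries are equal. The price of equality of an instance is $\dfrac{\max_{\boldsymbol{\alpha},\,S\in\mathsf{NE}(\boldsymbol{\alpha})}(1-\sum_i\alpha_i)f(S)}{\max_{\boldsymbol{\alpha}\text{ equal-pay},\,S\in\mathsf{NE}(\boldsymbol{\alpha})}(1-\sum_i\alpha_i)f(S)}$. *)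

From HB Require Import structures.
From mathcomp Require Import all_boot all_order all_algebra.
From mathcomp Require Import classical_sets reals exp.
Set Implicit Arguments. Unset Strict Implicit. Unset Printing Implicit Defensive.
Import Order.TTheory GRing.Theory Num.Theory.
Local Open Scope ring_scope.
Local Open Scope classical_set_scope.

(* Binary-action model with n agents: agent i has the single action i, so the
   set T of all actions is identified with 'I_n and S ⊆ T with {set 'I_n}. *)
Section Model.
Variables (R : realType) (n : nat).
Variables (cost : 'I_n -> R) (f : {set 'I_n} -> R).

Definition valid_instance : Prop :=
  (forall i, 0 <= cost i) /\
  f finset.set0 = 0 /\
  (forall S1 S2 : {set 'I_n}, S1 \subset S2 -> f S1 <= f S2) /\
  (forall S, 0 <= f S <= 1).

Definition additive_reward : Prop :=
  forall S : {set 'I_n}, f S = \sum_(i in S) f [set i].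

Definition valid_contract (alpha : 'I_n -> R) : Prop :=
  forall i, 0 <= alpha i <= 1.

Definition equal_pay (alpha : 'I_n -> R) : Prop :=
  forall i j, alpha i != 0 -> alpha j != 0 -> alpha i = alpha j.

Definition agent_util (alpha : 'I_n -> R) (i : 'I_n) (S : {set 'I_n}) : R :=
  alpha i * f S - (if i \in S then cost i else 0).

(* pure Nash equilibrium: no agent gains by changing her own subset of actions
   (T_i = {i}, so her options are to include i or not). *)
Definition is_NE (alpha : 'I_n -> R) (S : {set 'I_n}) : Prop :=
  forall i : 'I_n, forall b : bool,
    agent_util alpha i (if b then i |: S else S :\ i) <= agent_util alpha i S.

Definition principal_util (alpha : 'I_n -> R) (S : {set 'I_n}) : R :=
  (1 - \sum_i alpha i) * f S.

Definition opt_values (P : ('I_n -> R) -> Prop) : set R :=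
  [set u | exists alpha S, valid_contract alpha /\ P alpha /\ is_NE alpha S /\
                           u = principal_util alpha S].

Definition OPT : R := sup (opt_values (fun _ => True)).
Definition OPT_equal_pay : R := sup (opt_values equal_pay).

Definition price_of_equality : R := OPT / OPT_equal_pay.
End Model.

From HB Require Import structures.
From mathcomp Require Import all_boot all_order all_algebra.
From mathcomp Require Import classical_sets reals exp.
From mathcomp Require Import ring lra zify.
Set Implicit Arguments.
Unset Strict Implicit.
Unset Printing Implicit Defensive.
Import Order.TTheory GRing.Theory Num.Theory.
Local Open Scope ring_scope.

(* With K = 2m, agent i with i + 1 < K^m is active, lies in
   level t = trunc_log K (i + 1), has weight w_i = 1/(m K^(t+1)) and cost w_i^2/2;
   the remaining agents have weight 0 and cost 1.  Level t holds K^(t+1) - K^t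
   agents of total weight (1 - 1/K)/m, so the reward of all active agents is
   1 - 1/K, and paying each of them w_i/2 gives the principal at least 1/4.
   An equal-pay contract must pay every working agent at least w_i/2.  If the
   heaviest worker is in level e and A = 1/(m K^(e+1)), the |S| workers then cost
   at least x = |S| A/2, while at most K^(e+1) workers weigh A and the others
   weigh at most A/K, so the reward is at most (1 + x)/m and the principal gets
   at most (1 - x)(1 + x)/m <= 1/m.  The price of equality is thus at least m/4,
   and (2m)^m <= n < (2m + 2)^(m + 1) forces m >= ln n / (12 ln ln n). *)

Section AdditiveReward.
Variables (R : realType) (n : nat) (w cost : 'I_n -> R).

Definition wsum (S : {set 'I_n}) : R := \sum_(i in S) w i.

Lemma wsumU1 [i] [S : {set 'I_n}] : i \notin S -> wsum (i |: S) = w i + wsum S.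
Proof. exact: big_setU1. Qed.

Lemma wsumD1 [i] [S : {set 'I_n}] : i \in S -> wsum S = w i + wsum (S :\ i).
Proof. exact: big_setD1. Qed.

Lemma additive_wsum : additive_reward wsum.
Proof. by move=> S; apply: eq_bigr => i _; rewrite /wsum big_set1. Qed.

Lemma is_NE_wsumP alpha (S : {set 'I_n}) :
  is_NE cost wsum alpha S <->
  (forall i, i \in S -> cost i <= alpha i * w i) /\
  (forall i, i \notin S -> alpha i * w i <= cost i).
Proof.
rewrite /is_NE /agent_util; split.
  move=> NE; split=> i Si.
  - by have /= := NE i false; rewrite (wsumD1 Si) setD11 Si; lra.
  - by have /= := NE i true; rewrite (wsumU1 Si) setU11 (negbTE Si); lra.
move=> [inS outS] i [] /=.
- have [Si | Si] := boolP (i \in S).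
    suff -> : i |: S = S by rewrite Si.
    by apply/finset.setUidPr; rewrite finset.sub1set.
  by rewrite (wsumU1 Si) setU11; have := outS i Si; lra.
- have [Si | Si] := boolP (i \in S); last first.
    suff -> : S :\ i = S by rewrite (negbTE Si).
    by apply/finset.setDidPl; rewrite disjoint_sym disjoints1.
  by rewrite (wsumD1 Si) setD11; have := inS i Si; lra.
Qed.

Hypothesis w_ge0 : forall i, 0 <= w i.

Lemma wsum_ge0 (S : {set 'I_n}) : 0 <= wsum S.
Proof. exact: sumr_ge0. Qed.

Lemma wsum_subset (S1 S2 : {set 'I_n}) : S1 \subset S2 -> wsum S1 <= wsum S2.
Proof.
move=> S12; rewrite /wsum [X in _ <= X](big_setID S1) (finset.setIidPr S12).
by rewrite lerDl sumr_ge0.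
Qed.

Lemma wsum_le_sum (S : {set 'I_n}) : wsum S <= \sum_i w i.
Proof. by rewrite /wsum [X in _ <= X](bigID (mem S)) /= lerDl sumr_ge0. Qed.

Lemma valid_instance_wsum :
  (forall i, 0 <= cost i) -> \sum_i w i <= 1 -> valid_instance cost wsum.
Proof.
move=> cost_ge0 w_le1; split=> //; split; first by rewrite /wsum big_set0.
split; first exact: wsum_subset.
by move=> S; rewrite wsum_ge0 (le_trans (wsum_le_sum S)).
Qed.
End AdditiveReward.

Lemma sum_ord_ltn_le (R : realType) n (S : {set 'I_n}) X :
  \sum_(i in S) ((i < X)%N)%:R <= X%:R :> R.
Proof.
apply: le_trans (@wsum_le_sum R n (fun i : 'I_n => ((i < X)%N)%:R) (fun=> ler0n _ _) S) _.
suff -> : \sum_(i < n) ((i < X)%N)%:R = (minn n X)%:R :> R by rewrite ler_nat geq_minr.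
elim: n {S} => [|n IH]; first by rewrite big_ord0 min0n.
by rewrite big_ord_recr /= IH -natrD; congr _%:R; case: ltnP => /=; lia.
Qed.

Section Optimum.
Variables (R : realType) (n : nat) (cost : 'I_n -> R) (f : {set 'I_n} -> R).
Hypothesis f_valid : valid_instance cost f.

Lemma principal_util_le1 alpha S :
  valid_contract alpha -> principal_util f alpha S <= 1.
Proof.
move=> alpha01; have [_ [_ [_ f01]]] := f_valid.
have /andP [f_ge0 f_le1] := f01 S.
have alpha_ge0 : 0 <= \sum_i alpha i by apply: sumr_ge0 => i _; case/andP: (alpha01 i).
rewrite /principal_util; nra.
Qed.

Lemma opt_values_ubound P : has_ubound (opt_values cost f P).
Proof. by exists 1 => _ [alpha [S [alpha01 [_ [_ ->]]]]]; exact: principal_util_le1. Qed.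

Lemma principal_util_le_OPT alpha S :
  valid_contract alpha -> is_NE cost f alpha S -> principal_util f alpha S <= OPT cost f.
Proof. by move=> alpha01 NE; apply: (ub_le_sup (opt_values_ubound _)); exists alpha, S. Qed.

Lemma principal_util_le_OPT_equal_pay alpha S :
  valid_contract alpha -> equal_pay alpha -> is_NE cost f alpha S ->
  principal_util f alpha S <= OPT_equal_pay cost f.
Proof.
by move=> alpha01 eq_pay NE; apply: (ub_le_sup (opt_values_ubound _)); exists alpha, S.
Qed.

Lemma OPT_equal_pay_le (x : R) :
  (exists alpha S, [/\ valid_contract alpha, equal_pay alpha & is_NE cost f alpha S]) ->
  (forall alpha S, valid_contract alpha -> equal_pay alpha -> is_NE cost f alpha S ->
     principal_util f alpha S <= x) ->
  OPT_equal_pay cost f <= x.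
Proof.
move=> [alpha [S [alpha01 eq_pay NE]]] util_le; apply: ge_sup.
  by exists (principal_util f alpha S), alpha, S.
by move=> _ [beta [T [beta01 [eq_pay_beta [NE_beta ->]]]]]; exact: util_le.
Qed.

Lemma price_of_equality_ge (lo hi : R) :
  0 <= lo -> lo <= OPT cost f -> 0 < OPT_equal_pay cost f -> OPT_equal_pay cost f <= hi ->
  lo / hi <= price_of_equality cost f.
Proof.
move=> lo_ge0 lo_le eq_gt0 eq_le; rewrite /price_of_equality.
have hi_gt0 : 0 < hi := lt_le_trans eq_gt0 eq_le.
apply: (@le_trans _ _ (lo / OPT_equal_pay cost f)).
  by apply: ler_wpM2l => //; rewrite lef_pV2 ?posrE.
by apply: ler_wpM2r => //; rewrite invr_ge0 ltW.
Qed.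
End Optimum.

Section LevelWeights.
Variables (R : realType) (K c : nat).
Hypotheses (K_gt1 : (1 < K)%N) (c_gt0 : (0 < c)%N).

Definition level_weight (e : nat) : R := ((c * K ^ e.+1)%:R)^-1.

Let denom_gt0 e : (0 < c * K ^ e.+1)%N.
Proof. by rewrite muln_gt0 c_gt0 expn_gt0 ltnW. Qed.

Lemma level_weight_gt0 e : 0 < level_weight e.
Proof. by rewrite invr_gt0 ltr0n. Qed.

Lemma level_weight_le1 e : level_weight e <= 1.
Proof. by rewrite invf_le1 ?ltr0n // ler1n. Qed.

Lemma level_weightS e : level_weight e.+1 = level_weight e / K%:R.
Proof. by rewrite /level_weight -invfM -natrM expnS mulnCA mulnC. Qed.

Lemma level_weight_nonincreasing :
  {homo level_weight : e1 e2 / (e1 <= e2)%N >-> e2 <= e1}.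
Proof.
move=> e1 e2 le12; rewrite lef_pV2 ?posrE ?ltr0n //.
by rewrite ler_nat leq_mul2l leq_exp2l // ltnS le12 orbT.
Qed.

Lemma level_weight_mass e : (K ^ e.+1)%:R * level_weight e = c%:R^-1.
Proof.
rewrite /level_weight natrM invfM mulrCA mulfV ?mulr1 //.
by rewrite pnatr_eq0 -lt0n expn_gt0 ltnW.
Qed.

Lemma sum_level_weight t :
  \sum_(1 <= j < K ^ t) level_weight (trunc_log K j) = t%:R * (1 - K%:R^-1) / c%:R.
Proof.
have K_gt0 : (0 < K)%N by exact: ltnW.
elim: t => [|t IH]; first by rewrite expn0 big_geq // !mul0r.
have Kt_ge1 : (1 <= K ^ t)%N by rewrite expn_gt0 K_gt0.
rewrite (big_cat_nat (n := K ^ t)) ?leq_pexp2l //= IH.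
rewrite (eq_big_nat _ _ (F2 := fun=> level_weight t)); last first.
  by move=> j /andP [lo hi]; rewrite (@trunc_log_eq _ t) // lo.
rewrite sumr_const_nat -[level_weight t *+ _]mulr_natr natrB ?leq_pexp2l // /level_weight natrM.
have Kt1_neq0 : (K ^ t.+1)%:R != 0 :> R by rewrite pnatr_eq0 -lt0n expn_gt0 K_gt0.
have K_neq0 : K%:R != 0 :> R by rewrite pnatr_eq0 -lt0n.
have c_neq0 : c%:R != 0 :> R by rewrite pnatr_eq0 -lt0n.
have -> : (K ^ t)%:R = (K ^ t.+1)%:R / K%:R :> R.
  by rewrite expnS natrM mulrAC divff ?mul1r.
rewrite -natr1; field.
by rewrite Kt1_neq0 K_neq0 c_neq0.
Qed.

Lemma level_weight_le_min_level e j : (e <= trunc_log K j)%N ->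
  level_weight (trunc_log K j) <=
    ((j <= K ^ e.+1)%N)%:R * level_weight e + level_weight e / K%:R.
Proof.
have w_ge0 e' : 0 <= level_weight e' by exact/ltW/level_weight_gt0.
rewrite leq_eqVlt => /orP [/eqP eq_e | lt_e].
  have j_lt := trunc_log_ltn j K_gt1; rewrite -eq_e in j_lt.
  by rewrite (ltnW j_lt) mul1r eq_e lerDl mulr_ge0 ?invr_ge0 ?ler0n.
apply: le_trans (level_weight_nonincreasing lt_e) _.
by rewrite -level_weightS lerDr mulr_ge0 ?ler0n.
Qed.
End LevelWeights.

Section Instance.
Variables (R : realType) (m n : nat).
Hypotheses (m_ge2 : (2 <= m)%N) (n_large : ((2 * m) ^ m <= n)%N).

Local Notation K := (2 * m)%N.
Local Notation lw := (@level_weight R K m).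

Definition poe_active (i : 'I_n) : bool := (i.+1 < K ^ m)%N.

Definition poe_weight (i : 'I_n) : R :=
  if poe_active i then lw (trunc_log K i.+1) else 0.

Definition poe_cost (i : 'I_n) : R :=
  if poe_active i then poe_weight i ^+ 2 / 2 else 1.

Local Notation f := (wsum poe_weight).

Let K_gt1 : (1 < K)%N. Proof. lia. Qed.
Let m_gt0 : (0 < m)%N. Proof. lia. Qed.
Let m_pos : 0 < m%:R :> R. Proof. by rewrite ltr0n. Qed.

Lemma poe_weight_gt0 i : poe_active i -> 0 < poe_weight i.
Proof. by rewrite /poe_weight => ->; exact: level_weight_gt0. Qed.

Lemma poe_weight_ge0 i : 0 <= poe_weight i.
Proof. by rewrite /poe_weight; case: ifP => // _; exact/ltW/level_weight_gt0. Qed.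

Lemma poe_weight_le1 i : poe_weight i <= 1.
Proof. by rewrite /poe_weight; case: ifP => // _; exact: level_weight_le1. Qed.

Lemma poe_cost_ge0 i : 0 <= poe_cost i.
Proof.
by rewrite /poe_cost; case: ifP => // _; rewrite divr_ge0 ?exprn_even_ge0.
Qed.

Lemma sum_poe_weight : \sum_i poe_weight i = 1 - K%:R^-1.
Proof.
have Km_gt0 : (0 < K ^ m)%N by rewrite expn_gt0 ltnW.
have Km_le : ((K ^ m).-1 <= n)%N by apply: leq_trans n_large; exact: leq_pred.
pose g j := if (j.+1 < K ^ m)%N then lw (trunc_log K j.+1) else 0.
have -> : \sum_i poe_weight i = \sum_(0 <= j < n) g j by rewrite big_mkord.
rewrite (big_cat_nat (n := (K ^ m).-1)) //= [X in _ + X]big1_seq ?addr0; last first.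
  by move=> j /andP [_]; rewrite mem_index_iota /g; case: ifP => //; lia.
rewrite (eq_big_nat _ _ (F2 := fun j => lw (trunc_log K j.+1))); last first.
  by move=> j /andP [_ lt_j]; rewrite /g ifT //; lia.
rewrite -(@big_add1 R 0 +%R 0 (K ^ m) xpredT (fun j => lw (trunc_log K j))).
by rewrite sum_level_weight // mulrAC divff ?mul1r // gt_eqF.
Qed.

Lemma poe_valid : valid_instance poe_cost f.
Proof.
apply: valid_instance_wsum; [exact: poe_weight_ge0 | exact: poe_cost_ge0 |].
by rewrite sum_poe_weight lerBlDr lerDl invr_ge0 ler0n.
Qed.

Lemma poe_NE_member alpha S i : is_NE poe_cost f alpha S -> i \in S ->
  poe_active i /\ poe_weight i / 2 <= alpha i.
Proof.
move=> /is_NE_wsumP [inS _] Si; have := inS i Si; rewrite /poe_cost.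
case: ifP => act; last by rewrite /poe_weight act mulr0 ler10.
move=> cost_le; split=> //; have w_gt0 := poe_weight_gt0 act.
by rewrite -(ler_pM2r w_gt0) mulrAC -expr2.
Qed.

Lemma poe_OPT_ge : 1 / 4 <= OPT poe_cost f.
Proof.
pose alpha i := poe_weight i / 2.
have alpha01 : valid_contract alpha.
  move=> i; have := poe_weight_ge0 i; have := poe_weight_le1 i.
  by rewrite /alpha => ? ?; apply/andP; split; lra.
have NE : is_NE poe_cost f alpha [set i | poe_active i].
  apply/is_NE_wsumP; split=> i; rewrite inE /poe_cost /alpha => act.
    by rewrite act expr2 mulrAC.
  by rewrite (negbTE act) /poe_weight (negbTE act) mulr0 ler01.
apply: le_trans (principal_util_le_OPT poe_valid alpha01 NE).
rewrite /principal_util /alpha -mulr_suml sum_poe_weight.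
have -> : f [set i | poe_active i] = \sum_i poe_weight i.
  rewrite /wsum big_mkcond; apply: eq_bigr => i _.
  by rewrite inE /poe_weight; case: (poe_active i).
rewrite sum_poe_weight.
have : K%:R^-1 <= 4^-1 :> R by rewrite lef_pV2 ?posrE ?ler_nat ?ltr0n; lia.
have : 0 <= K%:R^-1 :> R by rewrite invr_ge0 ler0n.
move: (K%:R^-1) => k; nra.
Qed.

Let n_gt0 : (0 < n)%N.
Proof. by apply: leq_trans n_large; rewrite expn_gt0 ltnW. Qed.

Let i0 : 'I_n := Ordinal n_gt0.

Lemma poe_equal_pay_witness : exists alpha S,
  [/\ valid_contract alpha, equal_pay alpha, is_NE poe_cost f alpha S &
      0 < principal_util f alpha S].
Proof.
pose alpha i := if i == i0 then poe_weight i0 / 2 else 0.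
have act0 : poe_active i0 by rewrite /poe_active /= -{1}(expn0 K) ltn_exp2l.
have w0_gt0 := poe_weight_gt0 act0; have w0_le1 := poe_weight_le1 i0.
exists alpha, [set i0]; split.
- by move=> i; rewrite /alpha; case: (i =P i0) => _; apply/andP; split; lra.
- by move=> i j; rewrite /alpha; case: (i =P i0); case: (j =P i0); rewrite ?eqxx.
- apply/is_NE_wsumP; split=> i; rewrite inE /alpha.
    by move=> /eqP ->; rewrite eqxx /poe_cost act0 expr2 mulrAC.
  by move=> /negbTE ->; rewrite mul0r poe_cost_ge0.
rewrite /principal_util /wsum big_set1 (bigD1 i0) //= big1 ?addr0.
  by rewrite /alpha eqxx; nra.
by move=> i /negbTE; rewrite /alpha => ->.
Qed.

Lemma poe_wsum_le_min_level (S : {set 'I_n}) e :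
  (forall i, i \in S -> poe_active i /\ (e <= trunc_log K i.+1)%N) ->
  f S <= (1 + #|S|%:R * (lw e / 2)) / m%:R.
Proof.
move=> S_above.
have w_le i : i \in S -> poe_weight i <= ((i < K ^ e.+1)%N)%:R * lw e + lw e / K%:R.
  move=> Si; have [act le_e] := S_above i Si.
  by rewrite /poe_weight act; exact: level_weight_le_min_level.
apply: le_trans (ler_sum _ w_le) _.
rewrite big_split /= -mulr_suml sumr_const -[_ *+ #|S|]mulr_natl mulrDl mul1r.
apply: lerD.
  rewrite -(@level_weight_mass R _ m K_gt1 e) ler_wpM2r ?sum_ord_ltn_le //.
  exact/ltW/level_weight_gt0.
suff -> : lw e / K%:R = lw e / 2 / m%:R by rewrite mulrA.
by rewrite natrM invfM mulrA.
Qed.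

Lemma poe_equal_pay_util_le alpha S :
  valid_contract alpha -> equal_pay alpha -> is_NE poe_cost f alpha S ->
  principal_util f alpha S <= m%:R^-1.
Proof.
move=> alpha01 eq_pay NE.
have alpha_ge0 i : 0 <= alpha i by case/andP: (alpha01 i).
have [-> | /set0Pn [i1 Si1]] := eqVneq S finset.set0.
  by rewrite /principal_util /wsum big_set0 mulr0 invr_ge0 ler0n.
have [st Sst st_min] := arg_minnP (fun i : 'I_n => trunc_log K i.+1) Si1.
set e := trunc_log K st.+1 in st_min.
have [act_st half_st] := poe_NE_member NE Sst.
have alpha_st : lw e / 2 <= alpha st by rewrite /poe_weight act_st in half_st.
have alpha_S i : i \in S -> alpha i = alpha st.
  move=> Si; have [act_i half_i] := poe_NE_member NE Si.
  have := poe_weight_gt0 act_i; have := poe_weight_gt0 act_st.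
  by move=> w_st w_i; apply: eq_pay; rewrite gt_eqF //; lra.
set x := #|S|%:R * (lw e / 2).
have x_ge0 : 0 <= x by rewrite mulr_ge0 ?ler0n ?divr_ge0 // ltW ?level_weight_gt0.
have x_le : x <= \sum_i alpha i.
  apply: le_trans (wsum_le_sum alpha_ge0 S); rewrite /wsum (eq_bigr _ alpha_S).
  by rewrite sumr_const -mulr_natl ler_wpM2l ?ler0n.
have fS_le : f S <= (1 + x) / m%:R.
  apply: poe_wsum_le_min_level => i Si.
  by split; [case: (poe_NE_member NE Si) | exact: st_min].
have fS_ge0 : 0 <= f S := wsum_ge0 poe_weight_ge0 S.
rewrite /principal_util; apply: le_trans (_ : (1 - x) * f S <= _).
  by apply: ler_wpM2r => //; lra.
have [x_le1 | x_gt1] := lerP x 1; last first.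
  by apply: le_trans (_ : 0 <= _); [nra | rewrite invr_ge0 ler0n].
apply: le_trans (ler_wpM2l (_ : 0 <= 1 - x) fS_le) _; first lra.
rewrite mulrA -[X in _ <= X]mul1r ler_wpM2r ?invr_ge0 ?ler0n //; nra.
Qed.

Lemma poe_price_of_equality_ge : m%:R / 4 <= price_of_equality poe_cost f.
Proof.
have [alpha [S [alpha01 eq_pay NE util_gt0]]] := poe_equal_pay_witness.
have -> : m%:R / 4 = (1 / 4) / m%:R^-1 :> R by rewrite invrK mul1r mulrC.
apply: price_of_equality_ge; first lra.
- exact: poe_OPT_ge.
- exact: lt_le_trans util_gt0 (principal_util_le_OPT_equal_pay poe_valid alpha01 eq_pay NE).
- by apply: OPT_equal_pay_le poe_equal_pay_util_le; exists alpha, S.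
Qed.
End Instance.

Lemma exists_exponent_bracket n : (16 <= n)%N ->
  exists m, [/\ (2 <= m)%N, ((2 * m) ^ m <= n)%N & (n < (2 * m.+1) ^ m.+1)%N].
Proof.
elim: n => [|n IH] //; rewrite leq_eqVlt => /orP [/eqP <- | lt16]; first by exists 2%N.
have [m [m_ge2 lo hi]] := IH lt16.
have [lt_n | ge_n] := ltnP n.+1 ((2 * m.+1) ^ m.+1).
  by exists m; split => //; exact: leq_trans lo _.
have eq_n : n.+1 = ((2 * m.+1) ^ m.+1)%N by apply/eqP; rewrite eqn_leq ge_n hi.
exists m.+1; split; [exact: leqW | by rewrite eq_n |].
rewrite eq_n (@leq_ltn_trans ((2 * m.+2) ^ m.+1)) ?leq_exp2r ?ltn_exp2l //; lia.
Qed.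

Lemma ln_ge1_subV (R : realType) (y : R) : 0 < y -> 1 - y^-1 <= ln y.
Proof.
move=> y_gt0; have yV_gt0 : 0 < y^-1 by rewrite invr_gt0.
have /le_ln1Dx : -1 < y^-1 - 1 by lra.
by rewrite addrC subrK lnV ?posrE //; lra.
Qed.

Section LogBounds.
Variables (R : realType) (m n : nat).
Hypotheses (m_ge2 : (2 <= m)%N) (n_ge : ((2 * m) ^ m <= n)%N)
  (n_lt : (n < (2 * m.+1) ^ m.+1)%N).

Let m_ge2R : 2 <= m%:R :> R. Proof. by rewrite ler_nat. Qed.
Let n_gt0 : 0 < n%:R :> R.
Proof. by rewrite ltr0n (leq_trans _ n_ge) // expn_gt0; lia. Qed.

Lemma ln_nat_le : ln (n%:R : R) <= 6 * m%:R * ln (m%:R : R).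
Proof.
have lnm_ge0 : 0 <= ln (m%:R : R) by apply: ln_ge0; have := m_ge2R; lra.
have le_m3 : ln ((2 * m.+1)%:R : R) <= 3 * ln (m%:R : R).
  rewrite -[3]/(3%:R) mulr_natl -lnXn ?ltr0n ?(ltnW m_ge2) //.
  rewrite ler_ln ?posrE ?exprn_gt0 ?ltr0n ?(ltnW m_ge2) //.
  by rewrite -natrX ler_nat !expnS expn0 muln1; nia.
have le_pow : ln (n%:R : R) <= m.+1%:R * ln ((2 * m.+1)%:R : R).
  rewrite mulr_natl -lnXn ?ltr0n // ler_ln ?posrE ?n_gt0 ?exprn_gt0 ?ltr0n //.
  by rewrite -natrX ler_nat ltnW.
apply: le_trans le_pow _.
have : m.+1%:R <= 2 * m%:R :> R by rewrite -natr1; have := m_ge2R; lra.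
have : 0 <= ln ((2 * m.+1)%:R : R) by apply: ln_ge0; rewrite ler1n.
nra.
Qed.

Lemma ln_nat_ge : 3 / 4 * m%:R <= ln (n%:R : R).
Proof.
have K_gt0 : 0 < (2 * m)%:R :> R by rewrite ltr0n; lia.
have ge_pow : m%:R * ln ((2 * m)%:R : R) <= ln (n%:R : R).
  rewrite mulr_natl -lnXn // ler_ln ?posrE ?exprn_gt0 //.
  by rewrite -natrX ler_nat.
have ln_K : 3 / 4 <= ln ((2 * m)%:R : R).
  apply: le_trans (ln_ge1_subV K_gt0).
  have K_ge4 : 4 <= (2 * m)%:R :> R by rewrite ler_nat; lia.
  have : (2 * m)%:R^-1 <= 4^-1 :> R by rewrite lef_pV2 ?posrE.
  lra.
nra.
Qed.

Lemma ln_ln_nat_ge : ln (m%:R : R) / 2 <= ln (ln (n%:R : R)).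
Proof.
have m34_gt0 : 0 < 3 / 4 * m%:R :> R by have := m_ge2R; lra.
have le_lnln : ln (3 / 4 * m%:R) <= ln (ln (n%:R : R)).
  by rewrite ler_ln ?posrE ?ln_nat_ge // (lt_le_trans m34_gt0 ln_nat_ge).
have : ln (m%:R : R) <= ln ((3 / 4 * m%:R) ^+ 2).
  by rewrite ler_ln ?posrE ?exprn_gt0 //; have := m_ge2R; nra.
rewrite lnXn //; lra.
Qed.

Lemma ln_div_ln_ln_nat_le : ln (n%:R : R) / ln (ln (n%:R : R)) <= 12 * m%:R.
Proof.
have lnm_gt0 : 0 < ln (m%:R : R) by apply: ln_gt0; have := m_ge2R; lra.
have lnln_gt0 : 0 < ln (ln (n%:R : R)) by have := ln_ln_nat_ge; lra.
rewrite ler_pdivrMr //; have := ln_nat_le; have := ln_ln_nat_ge; have := m_ge2R; nra.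
Qed.
End LogBounds.

Theorem proposition5p2 (R : realType) :
  exists (C : R) (N : nat), 0 < C /\
    forall n : nat, (N <= n)%N ->
      exists (cost : 'I_n -> R) (f : {set 'I_n} -> R),
        valid_instance cost f /\ additive_reward f /\
        C * (ln (n%:R) / ln (ln (n%:R))) <= price_of_equality cost f.
Proof.
exists (1 / 48), 16%N; split; first lra.
move=> n n_ge16; have [m [m_ge2 n_ge n_lt]] := exists_exponent_bracket n_ge16.
exists (@poe_cost R m n), (wsum (@poe_weight R m n)).
split; first exact: poe_valid.
split; first exact: additive_wsum.
apply: le_trans (@poe_price_of_equality_ge R m n m_ge2 n_ge).
by have := @ln_div_ln_ln_nat_le R m n m_ge2 n_ge n_lt; lra.
Qed.
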